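(* Let $N\ge3$ and $p>1$. For $\gamma>0$ let $R(\gamma)$ be the first positive zero of the solution $u(\cdot,\gamma)$ of (IVP$_\gamma$). Then $R(\gamma)\to\infty$ as $\gamma\downarrow0$.
   Context: $A(r)=\frac{2}{1+r^2}$, $p_{\rm S}=\frac{N+2}{N-2}$, $q=\frac{N-2}{2}(p-p_{\rm S})$. (IVP$_\gamma$): $u''+\frac{N-1}{r}u'+\frac{N(N-2)}{4}A(r)^2u+A(r)^{-q}|u|^{p-1}u=0$ on $(0,\infty)$, $u(0)=\gamma$, $u'(0)=0$. *)

From Stdlib Require Import Reals Lra.
Open Scope R_scope.

Definition Aw (r : R) : R := 2 / (1 + r ^ 2).

Definition pS (N : nat) : R := (INR N + 2) / (INR N - 2).

Definition qexp (N : nat) (p : R) : R := (INR N - 2) / 2 * (p - pS N).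

(* |u|^{p-1} u  (Rpower (Rabs 0) _ * 0 = 0, so the convention at u = 0 is harmless) *)
Definition powsgn (p u : R) : R := Rpower (Rabs u) (p - 1) * u.

Definition is_IVP_solution (N : nat) (p gamma : R) (u : R -> R) : Prop :=
  u 0 = gamma /\
  limit1_in (fun h => (u h - u 0) / h) (fun h => 0 < h) 0 0 /\
  exists u1 u2 : R -> R,
    forall r, 0 < r ->
      derivable_pt_lim u r (u1 r) /\
      derivable_pt_lim u1 r (u2 r) /\
      u2 r + (INR N - 1) / r * u1 r
        + INR N * (INR N - 2) / 4 * (Aw r) ^ 2 * u r
        + Rpower (Aw r) (- qexp N p) * powsgn p (u r) = 0.

From Stdlib Require Import Reals Lra Lia.
From Coquelicot Require Import Coquelicot.
Open Scope R_scope.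

(* The linear part of the equation has the explicit positive solution
   w(r) = (1 + r^2)^(-(N-2)/2).  For a solution u with u(0) = gamma, the Wronskian
   W = r^(N-1) (w u' - u w') tends to 0 at 0 and satisfies W' = - r^(N-1) A^(-q) |u|^(p-1) u w,
   so v = u / w has v' = W / (r^(N-1) w^2).  As long as |v - gamma| < gamma/2 on (0, t)
   with t <= M, u is at most 3 gamma / 2 there, whence |W(s)| <= C gamma^p s^N and
   |v - gamma| <= C_M gamma^p <= gamma/8 for small gamma.  A continuity argument then
   keeps |v - gamma| < gamma/2 on all of (0, M], so u = v w > 0 there. *)

Lemma limit1_in_ext (f g : R -> R) (D : R -> Prop) (l x0 : R) :
  (forall x, D x -> f x = g x) -> limit1_in f D l x0 -> limit1_in g D l x0.
Proof.
  intros Hfg Hf eps Heps.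
  destruct (Hf eps Heps) as [d [Hd Hfd]].
  exists d; split; [exact Hd |].
  intros x Hx; rewrite <- (Hfg x (proj1 Hx)); exact (Hfd x Hx).
Qed.

Lemma continuity_pt_limit1_in (f : R -> R) (D : R -> Prop) (x0 : R) :
  continuity_pt f x0 -> (forall x, D x -> x <> x0) -> limit1_in f D (f x0) x0.
Proof.
  intros Hf HD eps Heps.
  destruct (Hf eps Heps) as [d [Hd Hfd]].
  exists d; split; [exact Hd |].
  intros x [HDx Hxd]; apply Hfd; split; [split; [exact I | now apply not_eq_sym, HD] | exact Hxd].
Qed.

Lemma limit1_in_right_near (f : R -> R) (l : R) :
  limit1_in f (fun h => 0 < h) l 0 ->
  forall eta, 0 < eta -> exists d, 0 < d /\ forall h, 0 < h < d -> Rabs (f h - l) < eta.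
Proof.
  intros Hf eta Heta.
  destruct (Hf eta Heta) as [d [Hd Hfd]].
  exists d; split; [exact Hd |].
  intros h Hh; apply (Hfd h); split; [lra |].
  simpl; unfold Rdist; rewrite Rminus_0_r, Rabs_right; lra.
Qed.

Lemma limit1_in_of_diff_quotient (u : R -> R) (l : R) :
  limit1_in (fun h => (u h - u 0) / h) (fun h => 0 < h) l 0 ->
  limit1_in u (fun h => 0 < h) (u 0) 0.
Proof.
  intros Hq.
  pose proof (limit_plus _ _ _ _ _ _ (limit_mul _ _ _ _ _ _ Hq (lim_x _ 0))
    (limit_free (fun _ => u 0) _ 0 0)) as Hu.
  replace (l * 0 + u 0) with (u 0) in Hu by ring.
  refine (limit1_in_ext _ _ _ _ _ _ Hu).
  intros h Hh; field; lra.
Qed.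

Lemma limit1_in_right_of_derivable (f : R -> R) (l : R) :
  derivable_pt_lim f 0 l -> limit1_in f (fun h => 0 < h) (f 0) 0.
Proof.
  intros Hf; apply continuity_pt_limit1_in; [| intros x Hx; lra].
  apply derivable_continuous_pt; exists l; exact Hf.
Qed.

Lemma continuity_pt_near (f : R -> R) (x0 : R) :
  continuity_pt f x0 ->
  forall eps, 0 < eps -> exists d, 0 < d /\ forall x, Rabs (x - x0) < d -> Rabs (f x - f x0) < eps.
Proof.
  intros Hf eps Heps.
  destruct (Hf eps Heps) as [d [Hd Hfd]].
  exists d; split; [exact Hd |].
  intros x Hx; destruct (Req_dec x x0) as [-> | Hne].
  - rewrite Rminus_diag, Rabs_R0; exact Heps.
  - apply (Hfd x); split; [split; [exact I | now apply not_eq_sym] | exact Hx].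
Qed.

Lemma exists_small_derivative_near0 (u u1 : R -> R) :
  limit1_in (fun h => (u h - u 0) / h) (fun h => 0 < h) 0 0 ->
  (forall r, 0 < r -> derivable_pt_lim u r (u1 r)) ->
  forall eta rho, 0 < eta -> 0 < rho -> exists xi, 0 < xi < rho /\ Rabs (u1 xi) < eta.
Proof.
  intros Hq Hu eta rho Heta Hrho.
  destruct (limit1_in_right_near _ _ Hq (eta / 4) ltac:(lra)) as [d [Hd Hqd]].
  assert (Hsmall : forall h, 0 < h < d -> Rabs (u h - u 0) < eta / 4 * h).
  { intros h Hh; specialize (Hqd h Hh).
    unfold Rdiv in Hqd; rewrite Rminus_0_r, Rabs_mult, Rabs_inv, (Rabs_right h) in Hqd by lra.
    apply Rmult_lt_compat_r with (r := h) in Hqd; [| lra].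
    rewrite Rmult_assoc, Rinv_l in Hqd by lra; lra. }
  set (e := Rmin d rho / 2).
  assert (He : 0 < e < d /\ e < rho)
    by (pose proof (Rmin_l d rho); pose proof (Rmin_r d rho);
        pose proof (Rmin_pos d rho Hd Hrho); unfold e; lra).
  destruct (MVT_cor2 u u1 (e / 2) e ltac:(lra)) as [c [Hc Hce]].
  { intros c Hc; apply Hu; lra. }
  exists c; split; [lra |].
  pose proof (Hsmall e ltac:(lra)); pose proof (Hsmall (e / 2) ltac:(lra)).
  assert (Hdiff : Rabs (u1 c) * (e / 2) < 3 * eta / 8 * e).
  { replace (Rabs (u1 c) * (e / 2)) with (Rabs ((u e - u 0) - (u (e / 2) - u 0))).
    2: { replace ((u e - u 0) - (u (e / 2) - u 0)) with (u1 c * (e - e / 2)) by lra.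
         rewrite Rabs_mult, (Rabs_right (e - e / 2)) by lra; field. }
    eapply Rle_lt_trans; [apply Rabs_triang |]; rewrite Rabs_Ropp; lra. }
  nra.
Qed.

Lemma Rabs_sub_le_of_derive_le (f f' : R -> R) (l L s : R) :
  0 < s ->
  (forall c, 0 < c <= s -> derivable_pt_lim f c (f' c)) ->
  (forall c, 0 < c < s -> Rabs (f' c) <= L) ->
  (forall eta, 0 < eta -> exists xi, 0 < xi < s /\ Rabs (f xi - l) < eta) ->
  Rabs (f s - l) <= L * s.
Proof.
  intros Hs Hf Hf' Hnear.
  apply le_epsilon; intros eps Heps.
  destruct (Hnear eps Heps) as [xi [Hxi Hfxi]].
  destruct (MVT_cor2 f f' xi s ltac:(lra)) as [c [Hc Hcxi]].
  { intros c Hc; apply Hf; lra. }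
  assert (Hstep : Rabs (f s - f xi) <= L * s).
  { rewrite Hc, Rabs_mult, (Rabs_right (s - xi)) by lra.
    pose proof (Hf' c ltac:(lra)); pose proof (Rabs_pos (f' c)); nra. }
  replace (f s - l) with ((f s - f xi) + (f xi - l)) by ring.
  pose proof (Rabs_triang (f s - f xi) (f xi - l)); lra.
Qed.

Lemma continuity_bootstrap (f : R -> R) (a b M : R) :
  a < b ->
  (forall s, 0 < s <= M -> continuity_pt f s) ->
  (exists d, 0 < d /\ forall s, 0 < s < d -> f s < b) ->
  (forall t, 0 < t <= M -> (forall s, 0 < s < t -> f s < b) -> forall s, 0 < s < t -> f s <= a) ->
  forall s, 0 < s <= M -> f s < b.
Proof.
  intros Hab Hcont [d [Hd Hinit]] Hboot s Hs.
  set (G := fun t => t <= M /\ forall s, 0 < s < t -> f s < b).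
  assert (HG0 : G (Rmin d M)).
  { split; [apply Rmin_r |]; intros x Hx; apply Hinit; pose proof (Rmin_l d M); lra. }
  destruct (completeness G (ex_intro _ M (fun t Ht => proj1 Ht)) (ex_intro _ _ HG0))
    as [tau [Hub Hlub]].
  assert (HtauM : tau <= M) by (apply Hlub; intros t Ht; exact (proj1 Ht)).
  assert (Htau0 : 0 < tau)
    by (pose proof (Hub _ HG0); pose proof (Rmin_pos d M Hd ltac:(lra)); lra).
  assert (Hbelow : forall x, 0 < x < tau -> f x < b).
  { intros x Hx; apply Rnot_le_lt; intros Hfx.
    enough (tau <= x) by lra.
    apply Hlub; intros t [_ Ht]; apply Rnot_lt_le; intros Hxt.
    pose proof (Ht x ltac:(lra)); lra. }
  pose proof (Hboot tau ltac:(lra) Hbelow) as Hsmall.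
  destruct (continuity_pt_near f tau (Hcont tau ltac:(lra)) ((b - a) / 2) ltac:(lra))
    as [delta [Hdelta Hnear]].
  assert (Hftau : f tau < a + (b - a) / 2).
  { set (x := Rmax (tau / 2) (tau - delta / 2)).
    assert (Hx : 0 < x < tau /\ Rabs (x - tau) < delta).
    { unfold x; destruct (Rle_dec (tau / 2) (tau - delta / 2)).
      - rewrite Rmax_right by lra; rewrite Rabs_left; lra.
      - rewrite Rmax_left by lra; rewrite Rabs_left; lra. }
    pose proof (Hsmall x (proj1 Hx)); pose proof (Hnear x (proj2 Hx)) as Hfx.
    apply Rabs_def2 in Hfx; lra. }
  assert (Hbeyond : forall x, 0 < x < tau + delta -> f x < b).
  { intros x Hx; destruct (Rlt_le_dec x tau); [now apply Hbelow; lra |].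
    assert (Hfx : Rabs (f x - f tau) < (b - a) / 2) by (apply Hnear; rewrite Rabs_right; lra).
    apply Rabs_def2 in Hfx; lra. }
  assert (HMtau : M <= tau).
  { assert (HG : G (Rmin (tau + delta / 2) M)).
    { split; [apply Rmin_r |]; intros x Hx; apply Hbeyond.
      pose proof (Rmin_l (tau + delta / 2) M); lra. }
    pose proof (Hub _ HG); unfold Rmin in *; destruct (Rle_dec (tau + delta / 2) M); lra. }
  apply Hbeyond; lra.
Qed.

Definition wronskian (N : nat) (w w' u u' : R -> R) (r : R) : R :=
  r ^ (N - 1) * (w r * u' r - u r * w' r).

Lemma wronskian_derive (N : nat) (c F : R) (w w1 w2 u u1 u2 : R -> R) (r : R) :
  (1 <= N)%nat -> 0 < r ->
  derivable_pt_lim w r (w1 r) -> derivable_pt_lim w1 r (w2 r) ->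
  derivable_pt_lim u r (u1 r) -> derivable_pt_lim u1 r (u2 r) ->
  w2 r + (INR N - 1) / r * w1 r + c * w r = 0 ->
  u2 r + (INR N - 1) / r * u1 r + c * u r + F = 0 ->
  derivable_pt_lim (wronskian N w w1 u u1) r (- r ^ (N - 1) * F * w r).
Proof.
  intros HN Hr Hw Hw1 Hu Hu1 Hwode Huode.
  apply is_derive_Reals in Hw, Hw1, Hu, Hu1; apply is_derive_Reals.
  assert (Hpow : is_derive (fun x => x ^ (N - 1)) r (INR (N - 1) * r ^ Nat.pred (N - 1)))
    by (auto_derive; [trivial | ring]).
  pose proof (is_derive_mult _ _ _ _ _ Hpow
    (is_derive_minus _ _ _ _ _
       (is_derive_mult _ _ _ _ _ Hw Hu1 Rmult_comm)
       (is_derive_mult _ _ _ _ _ Hu Hw1 Rmult_comm)) Rmult_comm) as H.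
  unfold wronskian.
  match type of H with is_derive _ _ ?d =>
    replace (- r ^ (N - 1) * F * w r) with d; [exact H |] end.
  unfold minus, plus, opp, mult; simpl.
  assert (Hpow' : INR (N - 1) * r ^ Nat.pred (N - 1) = (INR N - 1) / r * r ^ (N - 1)).
  { replace (INR N - 1) with (INR (N - 1)) by (rewrite minus_INR by lia; simpl; ring).
    destruct (N - 1)%nat; simpl; field; lra. }
  rewrite Hpow'.
  replace (u2 r) with (- ((INR N - 1) / r * u1 r + c * u r + F)) by lra.
  replace (w2 r) with (- ((INR N - 1) / r * w1 r + c * w r)) by lra.
  field; lra.
Qed.

Lemma quotient_derive (N : nat) (w w1 u u1 : R -> R) (r : R) :
  0 < r -> w r <> 0 -> derivable_pt_lim w r (w1 r) -> derivable_pt_lim u r (u1 r) ->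
  derivable_pt_lim (fun s => u s / w s) r (wronskian N w w1 u u1 r / (r ^ (N - 1) * w r ^ 2)).
Proof.
  intros Hr Hw0 Hw Hu.
  pose proof (pow_lt r (N - 1) Hr).
  replace (wronskian N w w1 u u1 r / (r ^ (N - 1) * w r ^ 2))
    with ((u1 r * w r - w1 r * u r) / Rsqr (w r))
    by (unfold wronskian, Rsqr; field; lra).
  exact (derivable_pt_lim_div u w r (u1 r) (w1 r) Hu Hw Hw0).
Qed.

Lemma pow_sub1_mul (x : R) (n : nat) : (1 <= n)%nat -> x ^ n = x ^ (n - 1) * x.
Proof. intros Hn; replace n with (S (n - 1)) at 1 by lia; simpl; ring. Qed.

Lemma exp_le_compat (x y : R) : x <= y -> exp x <= exp y.
Proof. intros Hxy; apply Rnot_lt_le; intros Hlt; apply exp_lt_inv in Hlt; lra. Qed.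

Definition weight (N : nat) (r : R) : R := exp (- ((INR N - 2) / 2) * ln (1 + r ^ 2)).

Definition dweight (N : nat) (r : R) : R := - (INR N - 2) * r * weight N r / (1 + r ^ 2).

Definition d2weight (N : nat) (r : R) : R :=
  (INR N - 2) * weight N r * ((INR N - 1) * r ^ 2 - 1) / (1 + r ^ 2) ^ 2.

Lemma one_plus_sqr_pos (r : R) : 0 < 1 + r ^ 2.
Proof. nra. Qed.

Lemma weight_derive (N : nat) (r : R) : derivable_pt_lim (weight N) r (dweight N r).
Proof.
  pose proof (one_plus_sqr_pos r).
  apply is_derive_Reals; unfold weight, dweight.
  auto_derive; [lra |].
  replace (1 + r * (r * 1)) with (1 + r ^ 2) by ring.
  unfold weight; field; lra.
Qed.

Lemma dweight_derive (N : nat) (r : R) : derivable_pt_lim (dweight N) r (d2weight N r).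
Proof.
  pose proof (one_plus_sqr_pos r).
  apply is_derive_Reals; unfold d2weight, dweight, weight.
  auto_derive; [lra |].
  replace (1 + r * (r * 1)) with (1 + r ^ 2) by ring.
  field; lra.
Qed.

Lemma weight_ode (N : nat) (r : R) : 0 < r ->
  d2weight N r + (INR N - 1) / r * dweight N r
    + INR N * (INR N - 2) / 4 * Aw r ^ 2 * weight N r = 0.
Proof.
  intros Hr; pose proof (one_plus_sqr_pos r).
  unfold d2weight, dweight, Aw; field; lra.
Qed.

Lemma weight_pos (N : nat) (r : R) : 0 < weight N r.
Proof. apply exp_pos. Qed.

Lemma weight_0 (N : nat) : weight N 0 = 1.
Proof. unfold weight; rewrite pow_i, Rplus_0_r, ln_1, Rmult_0_r by lia; apply exp_0. Qed.

Lemma dweight_0 (N : nat) : dweight N 0 = 0.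
Proof. unfold dweight; field; pose proof (one_plus_sqr_pos 0); lra. Qed.

Lemma weight_antitone (N : nat) (r s : R) : (2 <= N)%nat -> 0 <= r <= s -> weight N s <= weight N r.
Proof.
  intros HN Hrs; unfold weight; apply exp_le_compat.
  apply le_INR in HN; replace (INR 2) with 2 in HN by (simpl; ring).
  pose proof (Rmult_le_compat_l ((INR N - 2) / 2) _ _ ltac:(lra)
    (ln_le (1 + r ^ 2) (1 + s ^ 2) ltac:(nra) ltac:(nra))).
  lra.
Qed.

Lemma weight_le_1 (N : nat) (r : R) : (2 <= N)%nat -> 0 <= r -> weight N r <= 1.
Proof. intros HN Hr; rewrite <- (weight_0 N); apply weight_antitone; [exact HN | lra]. Qed.

Lemma Rpower_Aw_le (e M c : R) :
  0 < c <= M -> Rpower (Aw c) e <= exp (Rabs e * (ln 2 + ln (1 + M ^ 2))).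
Proof.
  intros Hc; unfold Rpower; apply exp_le_compat.
  assert (HA : ln (Aw c) = ln 2 - ln (1 + c ^ 2)).
  { unfold Aw, Rdiv; rewrite ln_mult, ln_Rinv; [ring | nra | lra | apply Rinv_0_lt_compat; nra]. }
  assert (Hln2 : 0 < ln 2) by (rewrite <- ln_1; apply ln_increasing; lra).
  assert (Hlnc : 0 <= ln (1 + c ^ 2)) by (rewrite <- ln_1; apply ln_le; nra).
  assert (HlncM : ln (1 + c ^ 2) <= ln (1 + M ^ 2)) by (apply ln_le; nra).
  rewrite HA.
  apply Rle_trans with (Rabs e * Rabs (ln 2 - ln (1 + c ^ 2))).
  - rewrite <- Rabs_mult; apply Rle_abs.
  - apply Rmult_le_compat_l; [apply Rabs_pos | apply Rabs_le; lra].
Qed.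

Lemma powsgn_pos_le (p x U : R) :
  1 <= p -> 0 < x <= U -> 0 < powsgn p x <= Rpower U (p - 1) * U.
Proof.
  intros Hp Hx; unfold powsgn; rewrite Rabs_right by lra.
  assert (Hpow : 0 < Rpower x (p - 1)) by apply exp_pos.
  split; [apply Rmult_lt_0_compat; lra |].
  apply Rmult_le_compat; [lra | lra | apply Rle_Rpower_l; lra | lra].
Qed.

Lemma Rpower_lt_of_lt_root (x e k : R) : 0 < k -> 0 < e -> 0 < x < Rpower e (/ k) -> Rpower x k < e.
Proof.
  intros Hk He Hx.
  assert (Hroot : Rpower (Rpower e (/ k)) k = e) by (rewrite Rpower_mult, Rinv_l, Rpower_1; lra).
  rewrite <- Hroot; apply Rlt_Rpower_l; lra.
Qed.

Section Solution.

Variables (N : nat) (p g M : R) (u u1 u2 : R -> R).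
Hypothesis HN : (2 <= N)%nat.
Hypothesis Hp : 1 <= p.
Hypothesis Hg : 0 < g.
Hypothesis Hu0 : u 0 = g.
Hypothesis Hu'0 : limit1_in (fun h => (u h - u 0) / h) (fun h => 0 < h) 0 0.
Hypothesis Hode : forall r, 0 < r ->
  derivable_pt_lim u r (u1 r) /\
  derivable_pt_lim u1 r (u2 r) /\
  u2 r + (INR N - 1) / r * u1 r
    + INR N * (INR N - 2) / 4 * Aw r ^ 2 * u r
    + Rpower (Aw r) (- qexp N p) * powsgn p (u r) = 0.

Let W : R -> R := wronskian N (weight N) (dweight N) u u1.
Let v (s : R) : R := u s / weight N s.
Let K : R := exp (Rabs (qexp N p) * (ln 2 + ln (1 + M ^ 2))).
Let U : R := 3 * g / 2.
Let P : R := Rpower U (p - 1) * U.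

Lemma solution_limit0 : limit1_in u (fun h => 0 < h) g 0.
Proof. rewrite <- Hu0; exact (limit1_in_of_diff_quotient u 0 Hu'0). Qed.

Lemma ratio_limit0 : limit1_in v (fun h => 0 < h) g 0.
Proof.
  pose proof (limit_mul _ _ _ _ _ _ solution_limit0
    (limit_inv _ _ _ _ (limit1_in_right_of_derivable _ _ (weight_derive N 0))
       ltac:(rewrite weight_0; lra))) as H.
  rewrite weight_0, Rinv_1, Rmult_1_r in H; exact H.
Qed.

Lemma wronskian_solution_derive (r : R) : 0 < r ->
  derivable_pt_lim W r
    (- r ^ (N - 1) * (Rpower (Aw r) (- qexp N p) * powsgn p (u r)) * weight N r).
Proof.
  intros Hr; destruct (Hode r Hr) as [Hu [Hu1 Hur]].
  apply (wronskian_derive N (INR N * (INR N - 2) / 4 * Aw r ^ 2) _ _ _ (d2weight N) _ _ u2);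
    try assumption.
  - lia.
  - apply weight_derive.
  - apply dweight_derive.
  - exact (weight_ode N r Hr).
Qed.

Lemma ratio_derive (r : R) : 0 < r -> derivable_pt_lim v r (W r / (r ^ (N - 1) * weight N r ^ 2)).
Proof.
  intros Hr; apply quotient_derive; [exact Hr | | apply weight_derive | apply (Hode r Hr)].
  pose proof (weight_pos N r); lra.
Qed.

(* Only the right difference quotient of u at 0 is known, so W is shown to be small
   at points accumulating at 0 rather than to extend continuously by 0. *)
Lemma wronskian_small_near0 (eta rho : R) :
  0 < eta -> 0 < rho -> exists xi, 0 < xi < rho /\ Rabs (W xi) < eta.
Proof.
  intros Heta Hrho.
  set (G := fun x => x ^ (N - 1) * (u x * dweight N x)).
  assert (HG : limit1_in G (fun h => 0 < h) 0 0).
  { replace 0 with (0 ^ (N - 1) * (g * dweight N 0)) at 1 by (rewrite dweight_0; ring).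
    apply limit_mul; [| apply limit_mul; [exact solution_limit0 |]].
    - exact (limit1_in_right_of_derivable _ _ (derivable_pt_lim_pow 0 (N - 1))).
    - exact (limit1_in_right_of_derivable _ _ (dweight_derive N 0)). }
  destruct (limit1_in_right_near G 0 HG (eta / 2) ltac:(lra)) as [d [Hd HGd]].
  destruct (exists_small_derivative_near0 u u1 Hu'0 (fun r Hr => proj1 (Hode r Hr))
              (eta / 2) (Rmin rho (Rmin d 1)) ltac:(lra) ltac:(repeat apply Rmin_pos; lra))
    as [xi [Hxi Hu1xi]].
  pose proof (Rmin_l rho (Rmin d 1)); pose proof (Rmin_r rho (Rmin d 1));
    pose proof (Rmin_l d 1); pose proof (Rmin_r d 1).
  exists xi; split; [lra |].
  specialize (HGd xi ltac:(lra)); rewrite Rminus_0_r in HGd.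
  assert (Hpow : 0 < xi ^ (N - 1) <= 1)
    by (split; [apply pow_lt; lra | rewrite <- (pow1 (N - 1)); apply pow_incr; lra]).
  pose proof (weight_pos N xi); pose proof (weight_le_1 N xi HN ltac:(lra)).
  assert (Hfirst : Rabs (xi ^ (N - 1) * (weight N xi * u1 xi)) < eta / 2).
  { rewrite !Rabs_mult, (Rabs_right (xi ^ (N - 1))), (Rabs_right (weight N xi)) by lra.
    pose proof (Rabs_pos (u1 xi)).
    assert (weight N xi * Rabs (u1 xi) <= Rabs (u1 xi)) by nra.
    assert (0 <= weight N xi * Rabs (u1 xi)) by nra.
    nra. }
  unfold W, wronskian.
  replace (xi ^ (N - 1) * (weight N xi * u1 xi - u xi * dweight N xi))
    with (xi ^ (N - 1) * (weight N xi * u1 xi) - G xi) by (unfold G; ring).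
  pose proof (Rabs_triang (xi ^ (N - 1) * (weight N xi * u1 xi)) (- G xi)).
  rewrite Rabs_Ropp in *; unfold Rminus; lra.
Qed.

Lemma wronskian_bound (t : R) :
  t <= M -> (forall s, 0 < s < t -> 0 < u s <= U) ->
  forall s, 0 < s < t -> Rabs (W s) <= K * P * s ^ N.
Proof.
  intros HtM Hpos s Hs.
  rewrite <- (Rminus_0_r (W s)), pow_sub1_mul, <- Rmult_assoc by lia.
  apply Rabs_sub_le_of_derive_le
    with (f' := fun c =>
      - c ^ (N - 1) * (Rpower (Aw c) (- qexp N p) * powsgn p (u c)) * weight N c).
  - lra.
  - intros c Hc; apply wronskian_solution_derive; lra.
  - intros c Hc.
    assert (Hpow : 0 < c ^ (N - 1) <= s ^ (N - 1)) by (split; [apply pow_lt | apply pow_incr]; lra).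
    assert (HA : 0 < Rpower (Aw c) (- qexp N p) <= K)
      by (split; [apply exp_pos | unfold K; rewrite <- Rabs_Ropp; apply Rpower_Aw_le; lra]).
    assert (HF : 0 < powsgn p (u c) <= P) by (apply powsgn_pos_le; [lra | apply Hpos; lra]).
    pose proof (weight_pos N c); pose proof (weight_le_1 N c HN ltac:(lra)).
    set (A := Rpower (Aw c) (- qexp N p)) in *; set (F := powsgn p (u c)) in *.
    assert (HAF : 0 <= A * F <= K * P)
      by (split; [apply Rmult_le_pos | apply Rmult_le_compat]; lra).
    rewrite !Ropp_mult_distr_l_reverse, Rabs_Ropp, Rabs_right
      by (apply Rle_ge, Rmult_le_pos; [apply Rmult_le_pos |]; lra).
    replace (K * P * s ^ (N - 1)) with (s ^ (N - 1) * (K * P) * 1) by ring.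
    apply Rmult_le_compat; [apply Rmult_le_pos | | apply Rmult_le_compat |]; lra.
  - intros eta Heta; destruct (wronskian_small_near0 eta s Heta ltac:(lra)) as [xi [Hxi HW]].
    exists xi; rewrite Rminus_0_r; auto.
Qed.

Lemma ratio_bound (t : R) :
  t <= M -> (forall s, 0 < s < t -> Rabs (v s - g) < g / 2) ->
  forall s, 0 < s < t -> Rabs (v s - g) <= K * P * M ^ 2 / weight N M ^ 2.
Proof.
  intros HtM Hclose s Hs.
  assert (Hpos : forall c, 0 < c < t -> 0 < u c <= U).
  { intros c Hc; pose proof (Hclose c Hc) as Hv; apply Rabs_def2 in Hv.
    pose proof (weight_pos N c); pose proof (weight_le_1 N c HN ltac:(lra)).
    replace (u c) with (v c * weight N c) by (unfold v; field; lra).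
    unfold U; split; nra. }
  pose proof (weight_pos N M) as HwM.
  assert (HKP : 0 <= K * P)
    by (apply Rmult_le_pos;
        [apply Rlt_le, exp_pos | apply Rmult_le_pos; [apply Rlt_le, exp_pos | unfold U; lra]]).
  apply Rle_trans with (K * P * M / weight N M ^ 2 * s).
  2: { replace (K * P * M ^ 2 / weight N M ^ 2) with (K * P * M / weight N M ^ 2 * M)
         by (field; lra).
       apply Rmult_le_compat_l; [| lra].
       apply Rmult_le_pos; [nra | apply Rlt_le, Rinv_0_lt_compat; nra]. }
  apply Rabs_sub_le_of_derive_le with (f' := fun c => W c / (c ^ (N - 1) * weight N c ^ 2)).
  - lra.
  - intros c Hc; apply ratio_derive; lra.
  - intros c Hc.
    pose proof (wronskian_bound t HtM Hpos c ltac:(lra)) as HWc.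
    assert (Hpow : 0 < c ^ (N - 1)) by (apply pow_lt; lra).
    assert (Hwc : weight N M <= weight N c) by (apply weight_antitone; [exact HN | lra]).
    pose proof (weight_pos N c) as Hwc0.
    assert (Hden : 0 < c ^ (N - 1) * weight N c ^ 2)
      by (apply Rmult_lt_0_compat; [lra | apply pow_lt; lra]).
    unfold Rdiv; rewrite Rabs_mult, Rabs_inv, (Rabs_right (c ^ (N - 1) * weight N c ^ 2)) by lra.
    apply Rle_trans with (K * P * c ^ N * / (c ^ (N - 1) * weight N c ^ 2)).
    { apply Rmult_le_compat_r; [apply Rlt_le, Rinv_0_lt_compat; exact Hden | exact HWc]. }
    rewrite pow_sub1_mul by lia.
    replace (K * P * (c ^ (N - 1) * c) * / (c ^ (N - 1) * weight N c ^ 2))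
      with (K * P * c * / weight N c ^ 2) by (field; split; lra).
    apply Rmult_le_compat; [nra | apply Rlt_le, Rinv_0_lt_compat; nra | nra |].
    apply Rinv_le_contravar; nra.
  - intros eta Heta.
    destruct (limit1_in_right_near v g ratio_limit0 eta Heta) as [d [Hd Hvd]].
    exists (Rmin d s / 2).
    pose proof (Rmin_l d s); pose proof (Rmin_r d s); pose proof (Rmin_pos d s Hd ltac:(lra)).
    split; [lra | apply Hvd; lra].
Qed.

Lemma solution_pos : K * P * M ^ 2 / weight N M ^ 2 <= g / 8 -> forall s, 0 < s <= M -> 0 < u s.
Proof.
  intros Hsmall s Hs.
  assert (Hclose : Rabs (v s - g) < g / 2).
  { apply (continuity_bootstrap (fun x => Rabs (v x - g)) (g / 8) (g / 2) M);
      [lra | | | | exact Hs].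
    - intros x Hx; apply (continuity_pt_comp (fun y => v y - g) Rabs).
      + apply continuity_pt_minus; [| apply continuity_pt_const; intros ? ?; reflexivity].
        apply derivable_continuous_pt; eexists; apply ratio_derive; lra.
      + apply Rcontinuity_abs.
    - destruct (limit1_in_right_near v g ratio_limit0 (g / 2) ltac:(lra)) as [d [Hd Hvd]].
      exists d; split; assumption.
    - intros t Ht Hclose x Hx; pose proof (ratio_bound t (proj2 Ht) Hclose x Hx); lra. }
  apply Rabs_def2 in Hclose; pose proof (weight_pos N s).
  replace (u s) with (v s * weight N s) by (unfold v; field; lra); nra.
Qed.

End Solution.

Theorem lemma6p1 (N : nat) (p : R) (HN : (3 <= N)%nat) (Hp : 1 < p) :
  forall M : R, 0 < M ->
  exists delta : R, 0 < delta /\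
    forall (gamma : R) (u : R -> R),
      0 < gamma < delta ->
      is_IVP_solution N p gamma u ->
      forall r : R, 0 < r <= M -> u r <> 0.
Proof.
  intros M HM.
  set (K := exp (Rabs (qexp N p) * (ln 2 + ln (1 + M ^ 2)))).
  set (wM := weight N M).
  (* (3 gamma / 2)^(p-1) < e makes the constant of solution_pos at most gamma / 8. *)
  set (e := wM ^ 2 / (12 * K * M ^ 2)).
  assert (HK : 0 < K) by apply exp_pos.
  assert (HwM : 0 < wM) by apply weight_pos.
  assert (He : 0 < e).
  { unfold e; apply Rdiv_lt_0_compat; [apply pow_lt | apply Rmult_lt_0_compat; [| apply pow_lt]]; lra. }
  exists (2 / 3 * Rpower e (/ (p - 1))).
  split; [pose proof (exp_pos (/ (p - 1) * ln e)); unfold Rpower; lra |].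
  intros g u [Hg Hgd] [Hu0 [Hu'0 [u1 [u2 Hode]]]] r Hr.
  enough (0 < u r) by lra.
  apply (solution_pos N p g M u u1 u2 ltac:(lia) ltac:(lra) Hg Hu0 Hu'0 Hode); [| lra].
  assert (HU : Rpower (3 * g / 2) (p - 1) < e) by (apply Rpower_lt_of_lt_root; lra).
  fold K wM.
  apply Rle_trans with (K * (e * (3 * g / 2)) * M ^ 2 / wM ^ 2).
  - unfold Rdiv; apply Rmult_le_compat_r; [apply Rlt_le, Rinv_0_lt_compat; nra |].
    apply Rmult_le_compat_r; [nra |].
    apply Rmult_le_compat_l; [lra |].
    apply Rmult_le_compat_r; lra.
  - unfold e; right; field; lra.
Qed.
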